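(* Let $K$ be a field, $m\ge2$, $d_1,\ldots,d_m$ positive integers, and $I_2(D)\subset K[x_1,\ldots,x_m,y_1,\ldots,y_m]$ the ideal generated by the $2$-minors of $D=\begin{pmatrix}x_1^{d_1}&\cdots&x_m^{d_m}\\ y_1^{d_1}&\cdots&y_m^{d_m}\end{pmatrix}$. Then $I_2(D)$ is prime if and only if $\gcd(d_i,d_j)=1$ for every $1\le i<j\le m$. *)

From HB Require Import structures.
From mathcomp Require Import all_boot all_order all_algebra.
From mathcomp Require Import mpoly.
Set Implicit Arguments. Unset Strict Implicit. Unset Printing Implicit Defensive.
Import Order.TTheory GRing.Theory Num.Theory.
Local Open Scope ring_scope.

Definition in_ideal_gen (R : comNzRingType) (gens : seq R) (p : R) : Prop :=
  exists c : seq R, p = \sum_(k < size gens) c`_k * gens`_k.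

Definition prime_ideal (R : comNzRingType) (I : R -> Prop) : Prop :=
  ~ I 1 /\ forall a b : R, I (a * b) -> I a \/ I b.

Definition xv (K : fieldType) (m : nat) (i : 'I_m) : {mpoly K[m + m]} :=
  'X_(lshift m i).
Definition yv (K : fieldType) (m : nat) (i : 'I_m) : {mpoly K[m + m]} :=
  'X_(rshift m i).

Definition minorD (K : fieldType) (m : nat) (d : 'I_m -> nat) (i j : 'I_m)
  : {mpoly K[m + m]} :=
  xv K i ^+ d i * yv K j ^+ d j - xv K j ^+ d j * yv K i ^+ d i.

Definition minors2 (K : fieldType) (m : nat) (d : 'I_m -> nat)
  : seq {mpoly K[m + m]} :=
  [seq minorD K d ij.1 ij.2 | ij <- enum [pred ij : 'I_m * 'I_m | (ij.1 < ij.2)%N]].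

Definition I2D (K : fieldType) (m : nat) (d : 'I_m -> nat)
  : {mpoly K[m + m]} -> Prop :=
  in_ideal_gen (minors2 K d).

From mathcomp Require Import all_boot all_algebra.
From mathcomp Require Import mpoly.
From mathcomp Require Import zify ring.
Set Implicit Arguments. Unset Strict Implicit. Unset Printing Implicit Defensive.
Import GRing.Theory.
Local Open Scope ring_scope.

(* If the d_i are pairwise coprime, I_2(D) is the kernel of the monomial
   substitution x_i |-> y_i t^(D / d_i), y_i |-> y_i with D = \prod_i d_i, hence
   prime. The minors lie in the kernel. Conversely, modulo I_2(D) every monomial
   is congruent to a standard one, divisible by no x_i^d_i y_j^d_j with i < j, and
   the substitution is injective on standard monomials: the exponent of t fixes
   each x-exponent modulo d_i by coprimality, and standardness pins it down.
   If instead g = gcd(d_i, d_j) > 1 for some i < j, the minor factors as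
   (A - B)(A^(g-1) + ... + B^(g-1)) with A^g = x_i^d_i y_j^d_j, B^g = x_j^d_j y_i^d_i;
   killing every variable but x_i and y_j maps I_2(D) into the multiples of
   x_i^d_i y_j^d_j but none of the two factors, so neither lies in I_2(D). *)

Lemma eqn_modMr_coprime a b c q : coprime q c ->
  (a * c = b * c %[mod q])%N -> (a = b %[mod q])%N.
Proof.
move=> co_qc; wlog le_ab : a b / (a <= b)%N => [sym|].
  by case: (leqP a b) => [/sym//|/ltnW/sym sym' /esym/sym'/esym].
move=> /esym/eqP; rewrite eqn_mod_dvd ?leq_mul2r ?le_ab ?orbT //.
by rewrite -mulnBl Gauss_dvdl // => dvd_q; apply/esym/eqP; rewrite eqn_mod_dvd.
Qed.

Lemma eqn_mod_leq_subn a b q : (a < b)%N -> (a = b %[mod q])%N -> (q <= b - a)%N.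
Proof.
move=> lt_ab /esym/eqP; rewrite eqn_mod_dvd; last exact: ltnW.
by move/dvdn_leq; apply; rewrite subn_gt0.
Qed.

Section IdealGen.
Variables (R : comNzRingType) (gens : seq R).
Local Notation I := (in_ideal_gen gens).

Lemma in_ideal_genP p :
  I p <-> exists f : nat -> R, p = \sum_(k < size gens) f k * gens`_k.
Proof.
split=> [[c ->]|[f ->]]; first by exists (nth 0 c).
by exists (mkseq f (size gens)); apply: eq_bigr => k _; rewrite nth_mkseq.
Qed.

Lemma in_ideal_gen0 : I 0.
Proof.
by apply/in_ideal_genP; exists (fun=> 0); rewrite big1 // => k _; rewrite mul0r.
Qed.

Lemma in_ideal_genD p q : I p -> I q -> I (p + q).
Proof.
move=> /in_ideal_genP[f ->] /in_ideal_genP[g ->]; apply/in_ideal_genP.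
exists (fun k => f k + g k).
by rewrite -big_split; apply: eq_bigr => k _; rewrite mulrDl.
Qed.

Lemma in_ideal_genMl r p : I p -> I (r * p).
Proof.
move=> /in_ideal_genP[f ->]; apply/in_ideal_genP; exists (fun k => r * f k).
by rewrite mulr_sumr; apply: eq_bigr => k _; rewrite mulrA.
Qed.

Lemma mem_in_ideal_gen g : g \in gens -> I g.
Proof.
move=> gens_g; have lt_g : (index g gens < size gens)%N by rewrite index_mem.
apply/in_ideal_genP; exists (fun k => (k == index g gens)%:R).
rewrite (bigD1 (Ordinal lt_g)) //= eqxx mul1r nth_index // big1 ?addr0 // => k.
by rewrite -val_eqE /= => /negPf->; rewrite mul0r.
Qed.

Lemma in_ideal_gen_rmorph_dvdr (S : comNzRingType) (f : {rmorphism R -> S}) c p :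
  (forall g, g \in gens -> exists a, f g = a * c) -> I p -> exists a, f p = a * c.
Proof.
move=> fgens /in_ideal_genP[h ->]; rewrite rmorph_sum.
apply: (big_ind (fun x => exists a, x = a * c)).
- by exists 0; rewrite mul0r.
- by move=> _ _ [a ->] [b ->]; exists (a + b); rewrite mulrDl.
move=> k _; rewrite rmorphM; have [a ->] := fgens _ (mem_nth 0 (ltn_ord k)).
by exists (f (h k) * a); rewrite mulrA.
Qed.

Lemma in_ideal_gen_rmorph_eq0 (S : comNzRingType) (f : {rmorphism R -> S}) p :
  (forall g, g \in gens -> f g = 0) -> I p -> f p = 0.
Proof.
move=> fgens Ip; have [a ->] : exists a, f p = a * 0.
  by apply: (in_ideal_gen_rmorph_dvdr _ Ip) => g /fgens->; exists 0; rewrite mulr0.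
by rewrite mulr0.
Qed.

End IdealGen.

Lemma prime_ideal_kernel (R : comNzRingType) (S : idomainType)
    (f : {rmorphism R -> S}) (I : R -> Prop) :
  (forall p, I p <-> f p = 0) -> prime_ideal I.
Proof.
move=> kerI; split; first by rewrite kerI rmorph1 => /eqP; rewrite oner_eq0.
by move=> a b; rewrite !kerI rmorphM => /eqP; rewrite mulf_eq0 => /orP[]/eqP; auto.
Qed.

Section MonomialRestriction.
Variables (R : comNzRingType) (n : nat).
Implicit Types (mu tau : 'X_{1..n}) (S : pred 'I_n).

Lemma mpolyX_eq_mulX_lem mu tau (c : {mpoly R[n]}) :
  'X_[mu] = c * 'X_[tau] -> (tau <= mu)%MM.
Proof.
move=> eq_mu; have : mu \in msupp ('X_[mu] : {mpoly R[n]}) by rewrite msuppX inE.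
by rewrite eq_mu (perm_mem (msuppMX _ _)) => /mapP[k _ ->]; rewrite lem_addr.
Qed.

Definition mrestrict S : n.-tuple {mpoly R[n]} :=
  [tuple if t \in S then 'X_t else 0 | t < n].

Lemma comp_mrestrictX_id S mu :
  (forall t, mu t != 0%N -> t \in S) -> 'X_[mu] \mPo mrestrict S = 'X_[mu].
Proof.
move=> muS; rewrite comp_mpolyX [RHS]mpolyXE_id; apply: eq_bigr => t _.
rewrite tnth_mktuple; case: ifP => // /negbT notSt.
by have /eqP-> : mu t == 0%N by apply: contraNT notSt => /muS.
Qed.

Lemma comp_mrestrictX_eq0 S mu t :
  mu t != 0%N -> t \notin S -> 'X_[mu] \mPo mrestrict S = 0.
Proof.
move=> mu_t notSt; rewrite comp_mpolyX (bigD1 t) //= tnth_mktuple.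
by rewrite (negPf notSt) expr0n (negPf mu_t) mul0r.
Qed.

End MonomialRestriction.

Local Notation xi := (lshift _).
Local Notation yi := (rshift _).

Section Cofactors.
Variables (m : nat) (d : 'I_m -> nat).

Definition dhat (k : 'I_m) : nat := \prod_(l < m | l != k) d l.

Lemma muln_dhat k : (d k * dhat k = \prod_(l < m) d l)%N.
Proof. by rewrite [RHS](bigD1 k). Qed.

Lemma dvdn_dhat k l : k != l -> (d k %| dhat l)%N.
Proof. by move=> neq_kl; rewrite /dhat (bigD1 k) //= dvdn_mulr. Qed.

Lemma dhat_gt0 k : (forall i, 0 < d i)%N -> (0 < dhat k)%N.
Proof. by move=> d_gt0; rewrite prodn_gt0. Qed.

Lemma coprime_dhat k : (forall i j : 'I_m, i < j -> coprime (d i) (d j))%N ->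
  coprime (dhat k) (d k).
Proof.
move=> d_coprime; apply: (big_ind (fun x => coprime x (d k))).
- exact: coprime1n.
- by move=> x y; rewrite coprimeMl => -> ->.
move=> l; case: (ltngtP l k) => [lt_lk|lt_kl|/val_inj->]; last by rewrite eqxx.
  by rewrite d_coprime.
by rewrite coprime_sym d_coprime.
Qed.

End Cofactors.

Section Minors.
Variables (K : fieldType) (m : nat) (d : 'I_m -> nat).

Lemma I2D_minor (i j : 'I_m) : (i < j)%N -> @I2D K m d (minorD K d i j).
Proof.
by move=> lt_ij; apply: mem_in_ideal_gen; apply/mapP; exists (i, j); rewrite ?mem_enum.
Qed.

Lemma minorDE (i j : 'I_m) : minorD K d i j =
  'X_[U_(xi i) *+ d i + U_(yi j) *+ d j] - 'X_[U_(xi j) *+ d j + U_(yi i) *+ d i].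
Proof. by rewrite /minorD /xv /yv !mpolyXD -!mpolyXn. Qed.

Lemma minorD_exp (i j : 'I_m) g : (g %| d i)%N -> (g %| d j)%N ->
  minorD K d i j = 'X_[U_(xi i) *+ (d i %/ g) + U_(yi j) *+ (d j %/ g)] ^+ g
                 - 'X_[U_(xi j) *+ (d j %/ g) + U_(yi i) *+ (d i %/ g)] ^+ g.
Proof.
by move=> gi gj; rewrite /minorD /xv /yv !mpolyXD -!mpolyXn !exprMn -!exprM !divnK.
Qed.

End Minors.

Section StandardForm.
Variables (K : fieldType) (m : nat) (d : 'I_m -> nat).
Hypothesis d_gt0 : forall i, (0 < d i)%N.
Local Notation I := (@I2D K m d).
Implicit Types mu : 'X_{1..m + m}.

Definition standard mu : bool :=
  [forall i : 'I_m, forall j : 'I_m,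
     (i < j)%N ==> ~~ ((d i <= mu (xi i)) && (d j <= mu (yi j)))%N].

(* Replacing x_i^d_i y_j^d_j by x_j^d_j y_i^d_i (i < j) lowers this weight by
   (\prod_l d l) * (j - i). *)
Definition reduction_weight mu : nat :=
  \sum_(i < m) mu (xi i) * (dhat d i * (m - i)).

Lemma reduction_weightD mu mu' :
  reduction_weight (mu + mu')%MM = (reduction_weight mu + reduction_weight mu')%N.
Proof. by rewrite -big_split; apply: eq_bigr => i _; rewrite mnmDE mulnDl. Qed.

Lemma reduction_weight_xi k c :
  reduction_weight (U_(xi k) *+ c)%MM = (c * (dhat d k * (m - k)))%N.
Proof.
rewrite /reduction_weight (bigD1 k) //= mulmnE mnm1E eqxx mul1n big1 ?addn0 //.
by move=> i; rewrite mulmnE mnm1E eq_lshift eq_sym => /negPf->.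
Qed.

Lemma reduction_weight_yi k c : reduction_weight (U_(yi k) *+ c)%MM = 0%N.
Proof. by rewrite /reduction_weight big1 // => i _; rewrite mulmnE mnm1E eq_rlshift. Qed.

Lemma reduction_step mu : ~~ standard mu ->
  exists2 mu', (reduction_weight mu' < reduction_weight mu)%N & I ('X_[mu] - 'X_[mu']).
Proof.
case/forallPn=> i /forallPn[j]; rewrite negb_imply negbK.
case/andP=> lt_ij /andP[di_le dj_le].
set a := (U_(xi i) *+ d i + U_(yi j) *+ d j)%MM.
set b := (U_(xi j) *+ d j + U_(yi i) *+ d i)%MM.
have le_a_mu : (a <= mu)%MM.
  apply/mnm_lepP => t; rewrite mnmDE !mulmnE !mnm1E.
  case: (eqVneq (xi i) t) => [<-|_]; first by rewrite eq_rlshift mul1n addn0.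
  by case: (eqVneq (yi j) t) => [<-|_]; rewrite /= ?mul1n.
have mu_split : mu = ((mu - a) + a)%MM by rewrite submK.
exists ((mu - a) + b)%MM.
  rewrite [in X in (_ < X)%N]mu_split !reduction_weightD ltn_add2l.
  rewrite !reduction_weight_xi !reduction_weight_yi !addn0 !mulnA !muln_dhat.
  by rewrite ltn_pmul2l ?prodn_gt0 //; have := ltn_ord j; lia.
have -> : 'X_[mu] - 'X_[mu - a + b] = 'X_[mu - a] * minorD K d i j.
  by rewrite minorDE mulrBr -!mpolyXD -mu_split.
by apply: in_ideal_genMl; apply: I2D_minor.
Qed.

Lemma standard_congr mu : exists2 nu, standard nu & I ('X_[mu] - 'X_[nu]).
Proof.
elim: {mu}(reduction_weight mu).+1 {-2}mu (ltnSn (reduction_weight mu)) => // w IH mu.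
case: (boolP (standard mu)) => [std_mu _|/reduction_step[mu' lt_mu' Imu']].
  by exists mu; rewrite // subrr; apply: in_ideal_gen0.
rewrite ltnS => le_mu; have [|nu std_nu Inu] := IH mu'; first exact: leq_trans le_mu.
by exists nu => //; rewrite -(subrKA 'X_[mu']); apply: in_ideal_genD.
Qed.

Lemma standard_form (p : {mpoly K[m + m]}) :
  exists2 q, I (p - q) & forall nu, nu \in msupp q -> standard nu.
Proof.
elim/mpolyind: p => [|c mu p _ _ [q Iq std_q]].
  by exists 0; rewrite ?msupp0 // subr0; apply: in_ideal_gen0.
have [nu std_nu Inu] := standard_congr mu.
exists (c *: 'X_[nu] + q).
  have -> : c *: 'X_[mu] + p - (c *: 'X_[nu] + q) = c%:MP * ('X_[mu] - 'X_[nu]) + (p - q).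
    by rewrite -!mul_mpolyC; ring.
  by apply: in_ideal_genD => //; apply: in_ideal_genMl.
move=> nu' /msuppD_le; rewrite mem_cat => /orP[/msuppZ_le|/std_q //].
by rewrite msuppX inE => /eqP->.
Qed.

End StandardForm.

Section Parametrization.
Variables (K : fieldType) (m : nat) (d : 'I_m -> nat) (i0 : 'I_m).
Local Notation P := {mpoly K[m + m]}.
Local Notation I := (@I2D K m d).
Local Notation z := (xi i0).
Implicit Types mu nu : 'X_{1..m + m}.

(* x_i |-> y_i z^(dhat d i) and y_i |-> y_i: the variable z = x_i0 plays the
   parameter t, which is harmless as no image involves any other x. *)
Definition param_var (i : 'I_m) : 'X_{1..m + m} := (U_(yi i) + U_(z) *+ dhat d i)%MM.

Definition param_subst : (m + m).-tuple P :=
  [tuple if split t is inl i then 'X_[param_var i] else 'X_t | t < m + m].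
Local Notation param := (comp_mpoly param_subst).

Definition param_mnm mu : 'X_{1..m + m} :=
  (\sum_(i < m) param_var i *+ mu (xi i) + \sum_(i < m) U_(yi i) *+ mu (yi i))%MM.

Definition xweight mu : nat := \sum_(i < m) mu (xi i) * dhat d i.

Lemma param_mpolyX mu : param 'X_[mu] = 'X_[param_mnm mu].
Proof.
rewrite comp_mpolyX big_split_ord /= mpolyXD -!mprodXnE.
congr (_ * _); apply: eq_bigr => i _; rewrite tnth_mktuple.
  by rewrite (unsplitK (inl i : 'I_m + 'I_m)).
by rewrite (unsplitK (inr i : 'I_m + 'I_m)).
Qed.

Lemma param_xi i : param 'X_(xi i) = 'X_(yi i) * 'X_z ^+ dhat d i.
Proof.
rewrite comp_mpolyXU -tnth_nth tnth_mktuple.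
by rewrite (unsplitK (inl i : 'I_m + 'I_m)) mpolyXD -mpolyXn.
Qed.

Lemma param_yi i : param 'X_(yi i) = 'X_(yi i).
Proof.
by rewrite comp_mpolyXU -tnth_nth tnth_mktuple (unsplitK (inr i : 'I_m + 'I_m)).
Qed.

Lemma param_minor i j : param (minorD K d i j) = 0.
Proof.
rewrite /minorD /xv /yv !(rmorphB, rmorphM, rmorphXn) /= !param_xi !param_yi.
by rewrite !exprMn -!exprM ![(dhat d _ * _)%N]mulnC !muln_dhat; ring.
Qed.

Lemma param_I2D p : I p -> param p = 0.
Proof. by apply: in_ideal_gen_rmorph_eq0 => _ /mapP[ij _ ->]; apply: param_minor. Qed.

Lemma param_mnm_yi mu k : param_mnm mu (yi k) = (mu (xi k) + mu (yi k))%N.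
Proof.
rewrite mnmDE !mnm_sumE (bigD1 k) //= [X in (_ + X)%N](bigD1 k) //=.
rewrite !mulmnE mnmDE !mulmnE !mnm1E eqxx eq_lrshift mul0n addn0 !mul1n.
rewrite !big1 ?addn0 // => i /negPf ne_ik; rewrite mulmnE ?mnmDE ?mulmnE !mnm1E.
  by rewrite eq_rshift ne_ik.
by rewrite eq_rshift ne_ik eq_lrshift.
Qed.

Lemma param_mnm_z mu : param_mnm mu z = xweight mu.
Proof.
rewrite mnmDE !mnm_sumE [X in (_ + X)%N]big1 ?addn0 => [|i _]; last first.
  by rewrite mulmnE mnm1E eq_rlshift.
apply: eq_bigr => i _.
by rewrite mulmnE mnmDE mulmnE !mnm1E eq_rlshift eqxx add0n mul1n mulnC.
Qed.

Section Coprime.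
Hypothesis d_gt0 : forall i, (0 < d i)%N.
Hypothesis d_coprime : forall i j : 'I_m, (i < j)%N -> coprime (d i) (d j).

Lemma xweight_eq_mod nu nu' : xweight nu = xweight nu' ->
  forall k, (nu (xi k) = nu' (xi k) %[mod d k])%N.
Proof.
have xweight_mod mu k : (xweight mu = mu (xi k) * dhat d k %[mod d k])%N.
  rewrite /xweight (bigD1 k) //= -modnDmr.
  suff /eqP-> : (d k %| \sum_(i < m | i != k) mu (xi i) * dhat d i)%N by rewrite addn0.
  by apply: dvdn_sum => i ne_ik; rewrite dvdn_mull // dvdn_dhat // eq_sym.
move=> eq_w k; apply: (eqn_modMr_coprime (c := dhat d k)).
  by rewrite coprime_sym coprime_dhat.
by rewrite -!xweight_mod eq_w.
Qed.

(* Since nu' (xi k) >= d k, standardness of nu' gives nu' (yi l) < d l for l > k,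
   so nu (xi l) cannot exceed nu' (xi l), necessarily by at least d l, without
   making nu (yi l) negative. *)
Lemma xweight_lt_standard nu nu' (k : 'I_m) : standard d nu' ->
  (forall l, nu (xi l) + nu (yi l) = nu' (xi l) + nu' (yi l))%N ->
  (forall l, nu (xi l) = nu' (xi l) %[mod d l])%N ->
  (forall l : 'I_m, l < k -> nu (xi l) = nu' (xi l))%N ->
  (nu (xi k) < nu' (xi k))%N -> (xweight nu < xweight nu')%N.
Proof.
move=> std' eq_y eq_mod eq_lt lt_k.
have dk_le : (d k <= nu' (xi k))%N by have := eqn_mod_leq_subn lt_k (eq_mod k); lia.
have le_l l : l != k -> (nu (xi l) <= nu' (xi l))%N.
  case: (ltngtP l k) => [/eq_lt->//|lt_kl _|/val_inj->]; last by rewrite eqxx.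
  have lt_yl : (nu' (yi l) < d l)%N.
    by have := forallP (forallP std' k) l; rewrite lt_kl dk_le /= -ltnNge.
  rewrite leqNgt; apply/negP => lt_l.
  by have := eqn_mod_leq_subn lt_l (esym (eq_mod l)); have := eq_y l; lia.
rewrite /xweight (bigD1 k) //= [X in (_ < X)%N](bigD1 k) //= -addSn leq_add //.
  by rewrite ltn_pmul2r ?dhat_gt0.
by apply: leq_sum => l ne_lk; rewrite leq_mul2r le_l ?orbT.
Qed.

Lemma param_mnm_inj nu nu' : standard d nu -> standard d nu' ->
  param_mnm nu = param_mnm nu' -> nu = nu'.
Proof.
move=> std std' eq_nu.
have eq_y l : (nu (xi l) + nu (yi l) = nu' (xi l) + nu' (yi l))%N.
  by rewrite -!param_mnm_yi eq_nu.
have eq_w : xweight nu = xweight nu' by rewrite -!param_mnm_z eq_nu.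
have eq_x l : nu (xi l) = nu' (xi l).
  apply/eqP; apply: contraT => ne_l.
  case: (@arg_minnP _ l (fun k => nu (xi k) != nu' (xi k)) val ne_l) => k ne_k min_k.
  have eq_lt (l' : 'I_m) : (l' < k)%N -> nu (xi l') = nu' (xi l').
    by move=> lt_l'; apply/eqP; apply: contraTT lt_l' => /min_k; rewrite -leqNgt.
  have eq_mod := xweight_eq_mod eq_w.
  have [lt_k|lt_k|eq_k] := ltngtP (nu (xi k)) (nu' (xi k)).
  - by have := xweight_lt_standard std' eq_y eq_mod eq_lt lt_k; rewrite eq_w ltnn.
  - have := xweight_lt_standard std (fun l => esym (eq_y l)) (fun l => esym (eq_mod l))
      (fun l lt_l => esym (eq_lt l lt_l)) lt_k.
    by rewrite eq_w ltnn.
  - by rewrite eq_k eqxx in ne_k.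
apply/mnmP => t; rewrite -(splitK t); case: (split t) => l /=; first exact: eq_x.
by have := eq_y l; rewrite eq_x; lia.
Qed.

Lemma mcoeff_param_standard (q : P) nu :
  (forall nu', nu' \in msupp q -> standard d nu') -> nu \in msupp q ->
  (param q)@_(param_mnm nu) = q@_nu.
Proof.
move=> std_q supp_nu; rewrite {1}(mpolyE q) rmorph_sum raddf_sum /=.
rewrite (bigD1_seq nu) ?msupp_uniq //= big1_seq ?addr0 => [|nu' /andP[ne_nu' supp_nu']].
  by rewrite comp_mpolyZ param_mpolyX mcoeffZ mcoeffX eqxx mulr1.
rewrite comp_mpolyZ param_mpolyX mcoeffZ mcoeffX.
case: eqP => [/param_mnm_inj eq_nu|]; last by rewrite mulr0.
by rewrite eq_nu ?std_q ?eqxx in ne_nu'.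
Qed.

Lemma param_eq0 p : param p = 0 -> I p.
Proof.
move=> param_p; have [q Ipq std_q] := standard_form d_gt0 p.
have param_q : param q = 0.
  by have /eqP := param_I2D Ipq; rewrite rmorphB /= param_p sub0r oppr_eq0 => /eqP.
suff q0 : q = 0 by rewrite q0 subr0 in Ipq.
apply/mpolyP => nu; rewrite mcoeff0; apply/eqP; apply: contraT.
rewrite -mcoeff_msupp => supp_nu; have := supp_nu.
by rewrite mcoeff_msupp -(mcoeff_param_standard std_q supp_nu) param_q mcoeff0 eqxx.
Qed.

Lemma prime_I2D : prime_ideal I.
Proof.
by apply: (prime_ideal_kernel (f := param)) => p; split; [apply: param_I2D|apply: param_eq0].
Qed.

End Coprime.
End Parametrization.

Section Binomials.
Variables (m : nat) (k l : 'I_m) (a b : nat).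
Local Notation mu := (U_(xi k) *+ a + U_(yi l) *+ b)%MM.

Lemma binomial_mnm_xi : mu (xi k) = a.
Proof. by rewrite mnmDE !mulmnE !mnm1E eqxx eq_rlshift mul1n addn0. Qed.

Lemma binomial_mnm_yi : mu (yi l) = b.
Proof. by rewrite mnmDE !mulmnE !mnm1E eqxx eq_lrshift mul1n. Qed.

Lemma binomial_mnm_eq0 t : t != xi k -> t != yi l -> mu t = 0%N.
Proof. by rewrite mnmDE !mulmnE !mnm1E ![_ == t]eq_sym => /negPf-> /negPf->. Qed.

End Binomials.

Section CornerRestriction.
Variables (K : fieldType) (m : nat) (d : 'I_m -> nat) (i j : 'I_m).
Hypotheses (d_gt0 : forall i, (0 < d i)%N) (lt_ij : (i < j)%N).
Local Notation P := {mpoly K[m + m]}.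
Local Notation I := (@I2D K m d).
Local Notation corner :=
  (comp_mpoly (mrestrict K [pred t | (t == xi i) || (t == yi j)])).
Local Notation tau := (U_(xi i) *+ d i + U_(yi j) *+ d j)%MM.

Lemma corner_binomial a b :
  corner 'X_[U_(xi i) *+ a + U_(yi j) *+ b] = 'X_[U_(xi i) *+ a + U_(yi j) *+ b].
Proof.
apply: comp_mrestrictX_id => t; rewrite inE; apply: contraTT => /norP[ne_i ne_j].
by rewrite negbK binomial_mnm_eq0.
Qed.

Lemma corner_minor (k l : 'I_m) :
  (k < l)%N -> exists c, corner (minorD K d k l) = c * 'X_[tau].
Proof.
move=> lt_kl; rewrite minorDE rmorphB /=.
have -> : corner 'X_[U_(xi l) *+ d l + U_(yi k) *+ d k] = 0.
  have [eq_li|ne_li] := eqVneq l i.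
    apply: (comp_mrestrictX_eq0 _ (t := yi k)); first by rewrite binomial_mnm_yi -lt0n.
    rewrite inE eq_rlshift eq_rshift /=.
    by apply/eqP => eq_kj; move: lt_kl lt_ij; rewrite eq_li eq_kj; lia.
  apply: (comp_mrestrictX_eq0 _ (t := xi l)); first by rewrite binomial_mnm_xi -lt0n.
  by rewrite inE eq_lshift eq_lrshift orbF.
have [->|ne_ki] := eqVneq k i; last first.
  exists 0; rewrite mul0r subr0.
  apply: (comp_mrestrictX_eq0 _ (t := xi k)); first by rewrite binomial_mnm_xi -lt0n.
  by rewrite inE eq_lshift eq_lrshift orbF.
have [->|ne_lj] := eqVneq l j; first by exists 1; rewrite corner_binomial mul1r subr0.
exists 0; rewrite mul0r subr0.
apply: (comp_mrestrictX_eq0 _ (t := yi l)); first by rewrite binomial_mnm_yi -lt0n.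
by rewrite inE eq_rlshift eq_rshift.
Qed.

Lemma corner_I2D p : I p -> exists c, corner p = c * 'X_[tau].
Proof.
apply: in_ideal_gen_rmorph_dvdr => g /mapP[[k l]].
by rewrite mem_enum => lt_kl ->; apply: corner_minor.
Qed.

Lemma corner_notin_I2D p (mu : 'X_{1..m + m}) :
  (mu (xi i) < d i)%N -> corner p = 'X_[mu] -> ~ I p.
Proof.
move=> lt_mu corner_p /corner_I2D[c]; rewrite corner_p.
move=> /mpolyX_eq_mulX_lem/mnm_lepP/(_ (xi i)).
by rewrite binomial_mnm_xi leqNgt lt_mu.
Qed.

Lemma I2D_not_prime : ~~ coprime (d i) (d j) -> ~ prime_ideal I.
Proof.
move=> not_coprime [_ I_prime].
set g := gcdn (d i) (d j); set ai := (d i %/ g)%N; set aj := (d j %/ g)%N.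
have g_gt1 : (1 < g)%N by rewrite ltn_neqAle eq_sym not_coprime gcdn_gt0 d_gt0.
have d_i : (ai * g)%N = d i by rewrite divnK ?dvdn_gcdl.
have ai_gt0 : (0 < ai)%N by rewrite divn_gt0 ?gcdn_gt0 ?d_gt0 // dvdn_leq ?dvdn_gcdl.
have aj_gt0 : (0 < aj)%N by rewrite divn_gt0 ?gcdn_gt0 ?d_gt0 // dvdn_leq ?dvdn_gcdr.
set A : P := 'X_[U_(xi i) *+ ai + U_(yi j) *+ aj].
set B : P := 'X_[U_(xi j) *+ aj + U_(yi i) *+ ai].
have cornerA : corner A = A by rewrite corner_binomial.
have cornerB : corner B = 0.
  apply: (comp_mrestrictX_eq0 _ (t := xi j)); first by rewrite binomial_mnm_xi -lt0n.
  by rewrite inE eq_lshift eq_lrshift orbF; apply: contraTneq lt_ij => ->; rewrite ltnn.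
have := I2D_minor K d lt_ij; rewrite (minorD_exp K (dvdn_gcdl _ _) (dvdn_gcdr _ _)).
rewrite -/g -/ai -/aj -/A -/B subrXX => /I_prime[].
  apply: (corner_notin_I2D (mu := (U_(xi i) *+ ai + U_(yi j) *+ aj)%MM)).
    by rewrite binomial_mnm_xi -d_i ltn_Pmulr.
  by rewrite rmorphB /= cornerA cornerB subr0.
apply: (corner_notin_I2D (mu := (U_(xi i) *+ ai + U_(yi j) *+ aj) *+ g.-1)%MM).
  by rewrite mulmnE binomial_mnm_xi -d_i ltn_pmul2l // ltn_predL ltnW.
rewrite rmorph_sum /= (bigD1 (Ordinal (ltnW g_gt1))) //= big1 => [|k ne_k0]; last first.
  rewrite rmorphM !rmorphXn /= cornerB expr0n.
  by move: ne_k0; rewrite -val_eqE /= => /negPf->; rewrite mulr0.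
by rewrite addr0 subn0 expr0 mulr1 rmorphXn /= cornerA mpolyXn.
Qed.

End CornerRestriction.

Theorem proposition4p9 (K : fieldType) (m : nat) (d : 'I_m -> nat) :
  (2 <= m)%N -> (forall i, (0 < d i)%N) ->
  (prime_ideal (@I2D K m d) <->
   (forall i j : 'I_m, (i < j)%N -> coprime (d i) (d j))).
Proof.
move=> m_ge2 d_gt0; split=> [I_prime i j lt_ij | d_coprime].
  by apply: contraT => /(I2D_not_prime d_gt0 lt_ij)/(_ I_prime).
have m_gt0 : (0 < m)%N by apply: ltnW.
exact: (prime_I2D K (Ordinal m_gt0) d_gt0 d_coprime).
Qed.
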